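(* Let $M$ be a simple extended matrix with $n\geq 1$ rows, $m\geq 0$ left columns and $k\geq 1$ variables, $$M=\left[ \begin{array}{ccc|c} x_{11} & \cdots & x_{1m} & y_{1}\\ \vdots & & \vdots & \vdots\\ x_{n1} & \cdots & x_{nm} & y_{n}\end{array} \right].$$ The following are equivalent: (a) every finitely complete category with $M$-closed relations is a Mal'tsev category; (b) every variety with $M$-closed relations is a Mal'tsev variety; (c) there exist $i,i'\in\{1,\dots,n\}$ (not necessarily distinct) such that there is no $j\in\{1,\dots,m\}$ with $x_{ij}=y_i$ and $x_{i'j}=y_{i'}$.
   Context: A simple extended matrix $M$ (with parameters $n\geq 1$, $m\geq 0$, $k\geq 1$) is an $n\times(m+1)$ array as displayed, whose entries $x_{ij}$ and $y_i$ are (not necessarily distinct) variables from $\{x_1,\dots,x_k\}$. In a finitely complete category $\mathbb{C}$, an internal $n$-ary relation $r\colon R\rightarrowtail A^n$ (a monomorphism) is $M$-closed if for every object $B$ and every function $f\colon\{x_1,\dots,x_k\}\to\mathbb{C}(B,A)$ such that, for each $j\in\{1,\dots,m\}$, the morphism $(f(x_{1j}),\dots,f(x_{nj}))\colon B\to A^n$ factors through $r$, the morphism $(f(y_1),\dots,f(y_n))\colon B\to A^n$ also factors through $r$; $\mathbb{C}$ has $M$-closed relations if every internal $n$-ary relation is $M$-closed. (In a variety: for every subalgebra $R\subseteq A^n$ and every $f\colon\{x_1,\dots,x_k\}\to A$, if all columns $(f(x_{1j}),\dots,f(x_{nj}))$ lie in $R$ then $(f(y_1),\dots,f(y_n))\in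 R$.) Varieties are one-sorted finitary varieties of universal algebras. A Mal'tsev category is a finitely complete category in which every internal binary relation is difunctional; equivalently, it has $\mathsf{Mal}$-closed relations for the simple matrix $\mathsf{Mal}=\left[\begin{array}{ccc|c} x_1&x_2&x_2&x_1\\ x_1&x_1&x_2&x_2\end{array}\right]$. A Mal'tsev variety is a variety whose theory has a ternary term $p$ with $p(x,y,y)=x$ and $p(x,x,y)=y$ (equivalently, a variety that is a Mal'tsev category). *)

From mathcomp Require Import all_boot.
Set Implicit Arguments. Unset Strict Implicit. Unset Printing Implicit Defensive.

(*   entries x_{ij} = xs i j,  y_i = ys i, variables x_1..x_k = 'I_k.  *)

(* The matrix Mal = [x1 x2 x2 | x1 ; x1 x1 x2 | x2]  (n=2, m=3, k=2). *)
Definition Mal_xs (i : 'I_2) (j : 'I_3) : 'I_2 :=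
  if (i : nat) == 0 then (if (j : nat) == 0 then ord0 else ord_max)
  else (if (j : nat) == 2 then ord_max else ord0).
Definition Mal_ys (i : 'I_2) : 'I_2 := if (i : nat) == 0 then ord0 else ord_max.

(* Categories (hom-types with Leibniz equality).                       *)
Record category := Category {
  Ob :> Type;
  Hom : Ob -> Ob -> Type;
  comp : forall a b c, Hom b c -> Hom a b -> Hom a c;
  idm : forall a, Hom a a;
  comp_assoc : forall a b c d (h : Hom c d) (g : Hom b c) (f : Hom a b),
      comp h (comp g f) = comp (comp h g) f;
  comp_id_l : forall a b (f : Hom a b), comp (idm b) f = f;
  comp_id_r : forall a b (f : Hom a b), comp f (idm a) = f
}.
Arguments comp {c} {a b c0} : rename.
Arguments Hom {c} : rename.

Section Cat.
Variable C : category.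

Definition is_terminal (T : C) : Prop :=
  forall X : C, exists! f : Hom X T, True.

Definition is_pullback (X Y Z : C) (f : Hom X Z) (g : Hom Y Z)
    (P : C) (p1 : Hom P X) (p2 : Hom P Y) : Prop :=
  comp f p1 = comp g p2 /\
  forall (Q : C) (q1 : Hom Q X) (q2 : Hom Q Y), comp f q1 = comp g q2 ->
    exists! h : Hom Q P, comp p1 h = q1 /\ comp p2 h = q2.

Definition finitely_complete : Prop :=
  (exists T : C, is_terminal T) /\
  forall (X Y Z : C) (f : Hom X Z) (g : Hom Y Z),
    exists (P : C) (p1 : Hom P X) (p2 : Hom P Y), is_pullback f g p1 p2.

Definition is_power (n : nat) (A P : C) (pi : 'I_n -> Hom P A) : Prop :=
  forall (Q : C) (q : 'I_n -> Hom Q A),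
    exists! h : Hom Q P, forall i, comp (pi i) h = q i.

Definition mono (R P : C) (r : Hom R P) : Prop :=
  forall (X : C) (g h : Hom X R), comp r g = comp r h -> g = h.

Definition factors_through (n : nat) (A P R B : C) (pi : 'I_n -> Hom P A)
    (r : Hom R P) (g : 'I_n -> Hom B A) : Prop :=
  exists h : Hom B R, forall i, comp (pi i) (comp r h) = g i.

Definition M_closed (n m k : nat) (xs : 'I_n -> 'I_m -> 'I_k) (ys : 'I_n -> 'I_k)
    (A P R : C) (pi : 'I_n -> Hom P A) (r : Hom R P) : Prop :=
  forall (B : C) (f : 'I_k -> Hom B A),
    (forall j : 'I_m, factors_through pi r (fun i => f (xs i j))) ->
    factors_through pi r (fun i => f (ys i)).

Definition has_M_closed_relations (n m k : nat)
    (xs : 'I_n -> 'I_m -> 'I_k) (ys : 'I_n -> 'I_k) : Prop :=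
  forall (A P R : C) (pi : 'I_n -> Hom P A) (r : Hom R P),
    is_power pi -> mono r -> M_closed xs ys pi r.

(* Mal'tsev category: finitely complete, with Mal-closed relations
   (i.e. every internal binary relation is difunctional). *)
Definition malcev_category : Prop :=
  finitely_complete /\ has_M_closed_relations Mal_xs Mal_ys.
End Cat.

Record signature := Signature { Op : Type; arity : Op -> nat }.

Record algebra (S : signature) := Algebra {
  carrier :> Type;
  op : forall o : Op S, ('I_(arity o) -> carrier) -> carrier
}.
Arguments op {S} a o _ : rename.

Inductive term (S : signature) (X : Type) : Type :=
  | Var : X -> term S X
  | App : forall o : Op S, ('I_(arity o) -> term S X) -> term S X.

Fixpoint eval (S : signature) (X : Type) (A : algebra S) (env : X -> A)
    (t : term S X) : A :=
  match t with
  | Var x => env x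
  | App o args => op A o (fun l => @eval S X A env (args l))
  end.
Arguments eval {S X} A env t.

(* A variety is given by a signature S and a set E of equations
   (pairs of terms in countably many variables); its members are the
   models of E. *)
Definition equations (S : signature) := term S nat -> term S nat -> Prop.

Definition is_model (S : signature) (E : equations S) (A : algebra S) : Prop :=
  forall s t, E s t -> forall env : nat -> A, eval A env s = eval A env t.

Definition subalgebra_power (S : signature) (A : algebra S) (n : nat)
    (R : ('I_n -> A) -> Prop) : Prop :=
  forall (o : Op S) (a : 'I_(arity o) -> ('I_n -> A)),
    (forall l, R (a l)) -> R (fun i => op A o (fun l => a l i)).

Definition variety_has_M_closed_relations (S : signature) (E : equations S)
    (n m k : nat) (xs : 'I_n -> 'I_m -> 'I_k) (ys : 'I_n -> 'I_k) : Prop :=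
  forall A : algebra S, is_model E A ->
  forall R : ('I_n -> A) -> Prop, subalgebra_power R ->
  forall f : 'I_k -> A,
    (forall j : 'I_m, R (fun i => f (xs i j))) -> R (fun i => f (ys i)).

Definition env3 (T : Type) (a b c : T) (v : 'I_3) : T :=
  match (v : nat) with 0 => a | 1 => b | _ => c end.

Definition malcev_variety (S : signature) (E : equations S) : Prop :=
  exists p : term S 'I_3,
    forall A : algebra S, is_model E A -> forall x y : A,
      eval A (env3 x y y) p = x /\ eval A (env3 x x y) p = y.

(* If no column of M agrees with y on the two rows i, i', M-closedness can be
   tested on a relation built from a given binary relation (a pullback in a
   category, a relation on the free algebra on x_1..x_k in a variety) so that the
   columns of M become columns of Mal and y becomes the last column of Mal;
   this yields difunctionality, resp. a Mal'tsev term.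
   If instead every pair of rows is matched by a column, then every relation
   closed under a majority operation is M-closed, since such a relation
   contains every tuple whose projections to any two coordinates lie in its
   projections.  Majority algebras are then a counterexample in both settings:
   the order [b ==> a] on the two-element majority algebra is a
   majority-closed relation that is not difunctional. *)

From Pilot Require Import Defs.
From mathcomp Require Import all_boot.
From Stdlib Require Import ProofIrrelevance FunctionalExtensionality
  PropExtensionality ClassicalEpsilon.
Set Implicit Arguments. Unset Strict Implicit. Unset Printing Implicit Defensive.

Local Notation comp := Defs.comp.

Lemma sig_ext (A : Type) (P : A -> Prop) (u v : {a | P a}) :
  proj1_sig u = proj1_sig v -> u = v.
Proof. by apply: eq_sig_hprop => x; apply: proof_irrelevance. Qed.

Lemma I2_cases (i : 'I_2) : i = ord0 \/ i = ord_max.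
Proof. by case: i => -[|[|//]] ? ; [left|right]; apply: val_inj. Qed.

(** * Relations closed under a majority operation *)

Section MajorityClosedRelations.
Variables (T : Type) (maj : T -> T -> T -> T).
Hypotheses (majAAB : forall a b, maj a a b = a) (majABA : forall a b, maj a b a = a)
  (majBAA : forall a b, maj b a a = a).
Variables (n : nat) (R : ('I_n -> T) -> Prop).
Hypothesis R_maj : forall r1 r2 r3, R r1 -> R r2 -> R r3 ->
  R (fun i => maj (r1 i) (r2 i) (r3 i)).
Variable y : 'I_n -> T.
Hypothesis R_pairs : forall i i', exists2 r, R r & r i = y i /\ r i' = y i'.

(* Each index of [i :: i' :: a :: l] is missed by at most one of the three
   shorter lists, so the majority of three approximations agrees with [y]. *)
Lemma majority_closed_agree (l : seq 'I_n) (i i' : 'I_n) :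
  exists2 r, R r & forall x, x \in [:: i, i' & l] -> r x = y x.
Proof.
elim: l i i' => [|a l IHl] i i'.
  have [r Rr [ri ri']] := R_pairs i i'.
  by exists r => // x; rewrite !inE => /orP[]/eqP->.
have [r1 R1 E1] := IHl i i'; have [r2 R2 E2] := IHl i a.
have [r3 R3 E3] := IHl i' a.
exists (fun x => maj (r1 x) (r2 x) (r3 x)); first exact: R_maj.
move=> x; rewrite !inE => /or4P[] Hx.
- by rewrite E1 ?E2 ?majAAB // !inE Hx.
- by rewrite E1 ?E3 ?majABA // !inE Hx ?orbT.
- by rewrite E2 ?E3 ?majBAA // !inE Hx ?orbT.
- by rewrite E1 ?E2 ?E3 ?majAAB // !inE Hx !orbT.
Qed.

Lemma majority_closed_pairwise (i0 : 'I_n) : R y.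
Proof.
have [r Rr Er] := majority_closed_agree (enum 'I_n) i0 i0.
suff -> : y = r by [].
by apply: functional_extensionality => x; rewrite Er // !inE mem_enum !orbT.
Qed.
End MajorityClosedRelations.

(** * Majority algebras and their variety *)

Record majalg := MajAlg {
  mcarrier :> Type;
  maj : mcarrier -> mcarrier -> mcarrier -> mcarrier;
  majAAB : forall a b, maj a a b = a;
  majABA : forall a b, maj a b a = a;
  majBAA : forall a b, maj b a a = a }.
Arguments maj {m}.

Definition bmaj (a b c : bool) := [|| a && b, b && c | a && c].

Lemma bmaj_mono a b c a' b' c' :
  a ==> a' -> b ==> b' -> c ==> c' -> bmaj a b c ==> bmaj a' b' c'.
Proof. by move: a a' b b' c c'; do 6!case. Qed.

Definition bool_majalg : majalg :=
  @MajAlg bool bmaj ltac:(by do 2 case) ltac:(by do 2 case) ltac:(by do 2 case).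

Lemma env3_map (T U : Type) (f : T -> U) (a b c : T) :
  (fun l => f (env3 a b c l)) = env3 (f a) (f b) (f c).
Proof. by apply: functional_extensionality => -[[|[|?]] ?]. Qed.

Lemma eval_rel (S : signature) (A : algebra S) (Q : A -> A -> Prop)
    (Q_op : forall o a b, (forall l, Q (a l) (b l)) -> Q (op A o a) (op A o b))
    (X : Type) (e1 e2 : X -> A) :
  (forall x, Q (e1 x) (e2 x)) -> forall t, Q (eval A e1 t) (eval A e2 t).
Proof. by move=> Qe; elim=> [x|o a IH] /=; [apply: Qe | apply: Q_op]. Qed.

Definition maj_signature : signature := Signature (fun _ : unit => 3).

Definition maj_term (a b c : term maj_signature nat) : term maj_signature nat :=
  @App maj_signature nat tt (env3 a b c).

Definition maj_equations : equations maj_signature := fun s t =>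
  let x := Var maj_signature 0 in let y := Var maj_signature 1 in
  t = x /\ [\/ s = maj_term x x y, s = maj_term x y x | s = maj_term y x x].

Section MajorityModel.
Variables (A : algebra maj_signature) (A_model : is_model maj_equations A).

Definition op3 (a b c : A) : A := op A tt (env3 a b c).

Let env2 (a b : A) (x : nat) : A := if x is 0 then a else b.

Lemma eval_maj_term (env : nat -> A) (u v w : nat) :
  eval A env (maj_term (Var _ u) (Var _ v) (Var _ w)) = op3 (env u) (env v) (env w).
Proof. by rewrite /= (env3_map (eval A env)). Qed.

Lemma op3AAB a b : op3 a a b = a.
Proof.
by have := A_model (conj erefl (Or31 _ _ erefl)) (env2 a b); rewrite eval_maj_term.
Qed.
Lemma op3ABA a b : op3 a b a = a.
Proof.
by have := A_model (conj erefl (Or32 _ _ erefl)) (env2 a b); rewrite eval_maj_term.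
Qed.
Lemma op3BAA a b : op3 b a a = a.
Proof.
by have := A_model (conj erefl (Or33 _ _ erefl)) (env2 a b); rewrite eval_maj_term.
Qed.

Lemma subalgebra_power_op3 n (R : ('I_n -> A) -> Prop) : subalgebra_power R ->
  forall r1 r2 r3, R r1 -> R r2 -> R r3 -> R (fun i => op3 (r1 i) (r2 i) (r3 i)).
Proof.
move=> R_op r1 r2 r3 R1 R2 R3; have := R_op tt (env3 r1 r2 r3).
rewrite /op3.
under [fun i => _]functional_extensionality do rewrite (env3_map (fun r => r _)).
by apply=> -[[|[|?]] ?].
Qed.
End MajorityModel.

Definition algebra_of_majalg (X : majalg) : algebra maj_signature :=
  @Algebra maj_signature X
    (fun _ a => maj (a ord0) (a (@Ordinal 3 1 isT)) (a ord_max)).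

Lemma majalg_model (X : majalg) : is_model maj_equations (algebra_of_majalg X).
Proof.
by move=> s t [-> [->|->|->]] env /=; rewrite ?majAAB ?majABA ?majBAA.
Qed.

Definition matched_rows n m k (xs : 'I_n -> 'I_m -> 'I_k) (ys : 'I_n -> 'I_k)
  (i i' : 'I_n) : Prop := exists j, xs i j = ys i /\ xs i' j = ys i'.

Lemma maj_variety_M_closed n m k (xs : 'I_n -> 'I_m -> 'I_k) (ys : 'I_n -> 'I_k)
    (i0 : 'I_n) :
  (forall i i', matched_rows xs ys i i') ->
  variety_has_M_closed_relations maj_equations xs ys.
Proof.
move=> matched A A_model R R_op f R_cols.
apply: (majority_closed_pairwise (op3AAB A_model) (op3ABA A_model)
  (op3BAA A_model) (subalgebra_power_op3 R_op) _ i0) => i i'.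
have [j [<- <-]] := matched i i'.
by exists (fun i => f (xs i j)).
Qed.

Lemma maj_variety_not_malcev : ~ malcev_variety maj_equations.
Proof.
pose B := algebra_of_majalg bool_majalg.
case=> p Hp; have [p_ftt p_fft] := Hp B (@majalg_model _) false true.
suff: eval B (env3 false false true) p ==> eval B (env3 false true true) p.
  by rewrite p_ftt p_fft.
apply: (@eval_rel _ B implb) => [o a b le_ab|]; first exact: bmaj_mono.
by case=> -[|[|[|?]]].
Qed.

(** * Free algebras and the variety case *)

Fixpoint subst (S : signature) (X Y : Type) (s : X -> term S Y) (t : term S X) :
    term S Y :=
  match t with
  | Var x => s x
  | App o a => App (fun l => subst s (a l))
  end.

Lemma eval_subst (S : signature) (X Y : Type) (A : algebra S) (s : X -> term S Y)
    (env : Y -> A) (t : term S X) :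
  eval A env (subst s t) = eval A (fun x => eval A env (s x)) t.
Proof.
elim: t => [x|o a IH] //=; congr (op A o).
by apply: functional_extensionality => l; apply: IH.
Qed.

Section FreeAlgebra.
Variables (S : signature) (E : equations S) (V : Type).

Definition equiv_mod (t s : term S V) : Prop :=
  forall A, is_model E A -> forall env, eval A env t = eval A env s.

(* The free algebra on [V]: classes of terms, each class represented by the
   predicate [equiv_mod t]. *)
Definition free_carrier := {P : term S V -> Prop | exists t, P = equiv_mod t}.

Definition term_class (t : term S V) : free_carrier :=
  exist _ (equiv_mod t) (ex_intro _ t erefl).

Definition class_rep (c : free_carrier) : term S V :=
  proj1_sig (constructive_indefinite_description _ (proj2_sig c)).

Lemma term_class_eq t s : equiv_mod t s -> term_class t = term_class s.
Proof.
move=> ts; apply: sig_ext; apply: functional_extensionality => u.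
apply: propositional_extensionality.
by split=> tu A A_model env; rewrite -?(ts A A_model env) -tu ?ts.
Qed.

Lemma class_repK c : term_class (class_rep c) = c.
Proof.
apply: sig_ext; rewrite /class_rep.
by case: constructive_indefinite_description.
Qed.

Lemma eval_class_rep (A : algebra S) (t : term S V) :
  is_model E A -> forall env, eval A env (class_rep (term_class t)) = eval A env t.
Proof.
move=> A_model env; rewrite /class_rep; case: constructive_indefinite_description.
by move=> s /= ts; have : equiv_mod t t by []; rewrite ts => /(_ A A_model env).
Qed.

Definition free_algebra : algebra S :=
  @Algebra S free_carrier
    (fun o args => term_class (App (fun l => class_rep (args l)))).

Lemma eval_free (X : Type) (env : X -> free_algebra) (t : term S X) :
  eval free_algebra env t = term_class (subst (fun x => class_rep (env x)) t).
Proof.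
elim: t => [x|o a IH] /=; first by rewrite class_repK.
apply: term_class_eq => A A_model e /=; congr (op A o).
by apply: functional_extensionality => l; rewrite IH; apply: eval_class_rep.
Qed.

Lemma free_algebra_model : is_model E free_algebra.
Proof.
move=> s t Est env; rewrite !eval_free; apply: term_class_eq => A A_model e.
by rewrite !eval_subst; apply: A_model.
Qed.
End FreeAlgebra.

(* [R] collects the tuples of the free algebra on [x_1..x_k] whose [i0]- and
   [i1]-coordinates, specialised along [x_v |-> (v == y_i0 ? a : b)] and
   [x_v |-> (v == y_i1 ? b : a)], are the values of one ternary term at
   [(a,b,b)] and [(a,a,b)]: the column [y] then yields a Mal'tsev term. *)
Lemma malcev_variety_of_unmatched_rows (S : signature) (E : equations S)
    n m k (xs : 'I_n -> 'I_m -> 'I_k) (ys : 'I_n -> 'I_k) (i0 i1 : 'I_n) :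
  ~ matched_rows xs ys i0 i1 ->
  variety_has_M_closed_relations E xs ys -> malcev_variety E.
Proof.
move=> unmatched E_closed.
pose sel0 A (a b : A) v := if v == ys i0 then a else b.
pose sel1 A (a b : A) v := if v == ys i1 then b else a.
pose R (r : 'I_n -> free_algebra E 'I_k) := exists s : term S 'I_3,
  forall A, is_model E A -> forall a b : A,
    eval A (env3 a b b) s = eval A (sel0 A a b) (class_rep (r i0)) /\
    eval A (env3 a a b) s = eval A (sel1 A a b) (class_rep (r i1)).
have R_op : subalgebra_power R.
  move=> o args /(choice _) [s Es]; exists (App s) => A A_model a b.
  rewrite !(eval_class_rep _ A_model) /=.
  by split; congr (op A o); apply: functional_extensionality => l;
    case: (Es l A A_model a b).
have := E_closed _ (@free_algebra_model S E 'I_k) R R_op (fun v => term_class E (Var S v)).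
case=> [j|s Es].
- have [v3 Ev3] : exists v3 : 'I_3, forall A (a b : A),
      env3 a b b v3 = sel0 A a b (xs i0 j) /\ env3 a a b v3 = sel1 A a b (xs i1 j).
    rewrite /sel0 /sel1; case: eqP => [e0|_]; case: eqP => [e1|_].
    + by case: unmatched; exists j.
    + by exists ord0.
    + by exists ord_max.
    + by exists (@Ordinal 3 1 isT).
  by exists (Var S v3) => A A_model a b; rewrite !(eval_class_rep _ A_model); apply: Ev3.
- exists s => A A_model a b; have [-> ->] := Es A A_model a b.
  by rewrite !(eval_class_rep _ A_model) /= /sel0 /sel1 !eqxx.
Qed.

(** * Finitely complete categories *)

Section CategoryFacts.
Variable C : category.

Lemma terminal_hom_unique (T : C) : is_terminal T -> forall X (f g : Hom X T), f = g.
Proof. by move=> T_term X f g; have [h [_ Uh]] := T_term X; rewrite -(Uh f) -?(Uh g). Qed.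

Lemma finitely_complete_product : finitely_complete C -> forall X Y : C,
  exists (Pr : C) (p1 : Hom Pr X) (p2 : Hom Pr Y),
  forall (Q : C) (q1 : Hom Q X) (q2 : Hom Q Y),
    exists! h : Hom Q Pr, comp p1 h = q1 /\ comp p2 h = q2.
Proof.
move=> [[T T_term] C_pb] X Y; have [tX _] := T_term X; have [tY _] := T_term Y.
have [Pr [p1 [p2 [_ Upb]]]] := C_pb _ _ _ tX tY.
by exists Pr, p1, p2 => Q q1 q2; apply: Upb; apply: terminal_hom_unique.
Qed.

Lemma finitely_complete_power : finitely_complete C -> forall (X : C) n,
  exists (P : C) (pi : 'I_n -> Hom P X), is_power pi.
Proof.
move=> C_fc X; elim=> [|n [P [pi P_pow]]].
  have [[T T_term] _] := C_fc; have pi0 : 'I_0 -> Hom T X by case.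
  exists T, pi0 => Q q.
  have [h [_ _]] := T_term Q.
  by exists h; split=> [[]//|h' _]; apply: terminal_hom_unique.
have [Pr [p1 [p2 Pr_prod]]] := finitely_complete_product C_fc P X.
pose pi' (i : 'I_n.+1) := if unlift ord_max i is Some i' then comp (pi i') p1 else p2.
exists Pr, pi' => Q q.
have [qn [Eqn Uqn]] := P_pow Q (fun i' => q (lift ord_max i')).
have [h [[E1 E2] Uh]] := Pr_prod Q qn (q ord_max).
exists h; split=> [i|h' Eh'].
  by rewrite /pi'; case: unliftP => [i'|] ->; rewrite -?comp_assoc ?E1.
apply: Uh; split; last by have := Eh' ord_max; rewrite /pi' unlift_none.
symmetry; apply: Uqn => i'; have := Eh' (lift ord_max i').
by rewrite /pi' liftK comp_assoc.
Qed.

Section Powers.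
Variables (n : nat) (A P : C) (pi : 'I_n -> Hom P A).
Hypothesis P_pow : is_power pi.

Lemma power_hom_ext (Q : C) (g h : Hom Q P) :
  (forall i, comp (pi i) g = comp (pi i) h) -> g = h.
Proof.
move=> Egh; have [u [_ Uu]] := @P_pow Q (fun i => comp (pi i) h).
by rewrite -(Uu g) ?(Uu h).
Qed.

Lemma factors_throughP (R B : C) (r : Hom R P) (u : Hom B P) :
  factors_through pi r (fun i => comp (pi i) u) <-> exists h, comp r h = u.
Proof.
split=> [[h Eh]|[h <-]]; last by exists h.
by exists h; apply: power_hom_ext.
Qed.
End Powers.

Lemma pullback_mono (X Y Z P : C) (r : Hom X Z) (phi : Hom Y Z) (s : Hom P X)
    (r' : Hom P Y) :
  is_pullback r phi s r' -> mono r -> mono r'.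
Proof.
move=> [Er Upb] r_mono W g h Egh.
have Es : comp s g = comp s h.
  by apply: r_mono; rewrite !comp_assoc Er -!comp_assoc Egh.
have Eg : comp r (comp s g) = comp phi (comp r' g) by rewrite !comp_assoc Er.
by have [u [_ Uu]] := Upb W _ _ Eg; rewrite -(Uu g) ?(Uu h) // Es Egh.
Qed.

Lemma factors_through_pullback n n' (A A' P P' R R' B : C) (pi : 'I_n -> Hom P A)
    (pi' : 'I_n' -> Hom P' A') (r : Hom R P) (phi : Hom P' P) (s : Hom R' R)
    (r' : Hom R' P') (g : Hom B P') :
  is_power pi -> is_power pi' -> is_pullback r phi s r' ->
  factors_through pi' r' (fun i => comp (pi' i) g) <->
  factors_through pi r (fun i => comp (pi i) (comp phi g)).
Proof.
move=> P_pow P'_pow [Er Upb]; rewrite !factors_throughP //.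
split=> [[h <-]|[h Eh]]; first by exists (comp s h); rewrite !comp_assoc Er.
by have [u [[_ Eu] _]] := Upb B _ _ Eh; exists u.
Qed.
End CategoryFacts.

(* Pull [r] back along [(A x A)^n -> A^2], [(u_i, v_i)_i |-> (u_i0, v_i1)].
   At [x_v |-> (v == y_i0 ? x_1 : x_2, v == y_i1 ? x_2 : x_1)] the columns of
   [M] become columns of [Mal] (the unmatched rows exclude [(x_1, x_2)]) and
   [y] becomes [(x_1, x_2)]. *)
Lemma malcev_category_of_unmatched_rows (C : category) n m k
    (xs : 'I_n -> 'I_m -> 'I_k) (ys : 'I_n -> 'I_k) (i0 i1 : 'I_n) :
  ~ matched_rows xs ys i0 i1 ->
  finitely_complete C -> has_M_closed_relations C xs ys -> malcev_category C.
Proof.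
move=> unmatched C_fc C_closed; split=> // A P R pi r P_pow r_mono B f Mal_cols.
have [A2 [p1 [p2 A2_prod]]] := finitely_complete_product C_fc A A.
have [P' [pi' P'_pow]] := finitely_complete_power C_fc A2 n.
have [phi [Ephi _]] := P_pow P' (fun i => if (i : nat) == 0
  then comp p1 (pi' i0) else comp p2 (pi' i1)).
have [R' [s [r' R'_pb]]] := C_fc.2 _ _ _ r phi.
pose sel0 v := if v == ys i0 then f ord0 else f ord_max.
pose sel1 v := if v == ys i1 then f ord_max else f ord0.
have [f' Ef'] : exists f' : 'I_k -> Hom B A2,
    forall v, comp p1 (f' v) = sel0 v /\ comp p2 (f' v) = sel1 v.
  apply: (choice (fun v h => comp p1 h = sel0 v /\ comp p2 h = sel1 v)) => v.
  by have [h [Eh _]] := A2_prod B (sel0 v) (sel1 v); exists h.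
have factors_col (w : 'I_n -> 'I_k) : factors_through pi' r' (fun i => f' (w i)) <->
    factors_through pi r (fun i => if (i : nat) == 0 then sel0 (w i0) else sel1 (w i1)).
  have [g [Eg _]] := P'_pow B (fun i => f' (w i)).
  rewrite -(functional_extensionality _ _ Eg).
  rewrite (factors_through_pullback g P_pow P'_pow R'_pb).
  suff -> : (fun i => comp (pi i) (comp phi g)) =
    (fun i => if (i : nat) == 0 then sel0 (w i0) else sel1 (w i1)) by [].
  apply: functional_extensionality => i; rewrite comp_assoc Ephi.
  case: (I2_cases i) => ->; rewrite -comp_assoc Eg.
  - exact: (Ef' _).1.
  - exact: (Ef' _).2.
have pair_Mal (jj : 'I_3) : factors_through pi r (fun i =>
    if (i : nat) == 0 then f (Mal_xs ord0 jj) else f (Mal_xs ord_max jj)).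
  by have := Mal_cols jj; congr factors_through;
    apply: functional_extensionality => i; case: (I2_cases i) => ->.
have /factors_col : factors_through pi' r' (fun i => f' (ys i)).
  apply: (C_closed _ _ _ _ _ P'_pow (pullback_mono R'_pb r_mono)) => j.
  apply/factors_col; rewrite /sel0 /sel1.
  case: eqP => [e0|_]; case: eqP => [e1|_].
  - by case: unmatched; exists j.
  - exact: (pair_Mal ord0).
  - exact: (pair_Mal ord_max).
  - exact: (pair_Mal (@Ordinal 3 1 isT)).
rewrite /sel0 /sel1 !eqxx; congr factors_through.
by apply: functional_extensionality => i; case: (I2_cases i) => ->.
Qed.

(** * The category of majority algebras *)

Definition is_maj_hom (X Y : majalg) (h : X -> Y) : Prop :=
  forall a b c, h (maj a b c) = maj (h a) (h b) (h c).

Record maj_hom (X Y : majalg) := MajHom {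
  maj_fun :> X -> Y;
  maj_funP : is_maj_hom maj_fun }.

Lemma maj_hom_ext (X Y : majalg) (g h : maj_hom X Y) : g =1 h -> g = h.
Proof.
case: g h => g gP [h hP] /= /functional_extensionality gh; subst h.
by congr MajHom; apply: proof_irrelevance.
Qed.

Definition maj_comp (X Y Z : majalg) (g : maj_hom Y Z) (f : maj_hom X Y) :
    maj_hom X Z :=
  @MajHom X Z (fun x => g (f x)) (fun a b c => etrans (congr1 g (maj_funP f a b c))
    (maj_funP g _ _ _)).

Definition maj_id (X : majalg) : maj_hom X X := @MajHom X X id (fun _ _ _ => erefl).

Definition majalg_category : category.
Proof.
by refine (@Category majalg maj_hom maj_comp maj_id _ _ _) => *; apply: maj_hom_ext.
Defined.

Definition unit_majalg : majalg :=
  @MajAlg unit (fun _ _ _ => tt) (fun 'tt _ => erefl) (fun 'tt _ => erefl)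
    (fun 'tt _ => erefl).

Definition const_hom (X : majalg) (x : X) : maj_hom unit_majalg X :=
  @MajHom unit_majalg X (fun _ => x) (fun _ _ _ => esym (majAAB x x)).

Definition prod_majalg (X Y : majalg) : majalg :=
  @MajAlg (X * Y) (fun p q r => (maj p.1 q.1 r.1, maj p.2 q.2 r.2))
    (fun p q => ltac:(by rewrite /= !majAAB -surjective_pairing))
    (fun p q => ltac:(by rewrite /= !majABA -surjective_pairing))
    (fun p q => ltac:(by rewrite /= !majBAA -surjective_pairing)).

Definition fst_hom (X Y : majalg) : maj_hom (prod_majalg X Y) X :=
  @MajHom (prod_majalg X Y) X fst (fun _ _ _ => erefl).
Definition snd_hom (X Y : majalg) : maj_hom (prod_majalg X Y) Y :=
  @MajHom (prod_majalg X Y) Y snd (fun _ _ _ => erefl).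

Section SubMajalg.
Variables (X : majalg) (P : X -> Prop).
Hypothesis P_maj : forall a b c, P a -> P b -> P c -> P (maj a b c).

Definition sub_majalg : majalg.
Proof.
refine (@MajAlg {x | P x}
  (fun a b c => exist P _ (P_maj (proj2_sig a) (proj2_sig b) (proj2_sig c))) _ _ _)
  => a b; apply: sig_ext; [exact: majAAB | exact: majABA | exact: majBAA].
Defined.

Definition sval_hom : maj_hom sub_majalg X :=
  @MajHom sub_majalg X (@proj1_sig _ P) (fun _ _ _ => erefl).
End SubMajalg.

Lemma sval_hom_mono (X : majalg) (P : X -> Prop) (P_maj : forall a b c,
    P a -> P b -> P c -> P (maj a b c)) :
  mono (C:=majalg_category) (sval_hom P_maj).
Proof.
move=> Y g h Egh; apply: maj_hom_ext => y; apply: sig_ext.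
exact: (congr1 (fun u : maj_hom Y X => u y) Egh).
Qed.

Definition square_proj (X : majalg) (i : 'I_2) : maj_hom (prod_majalg X X) X :=
  if (i : nat) == 0 then fst_hom X X else snd_hom X X.

Lemma square_proj_power (X : majalg) : is_power (C:=majalg_category) (square_proj X).
Proof.
move=> Q q; have q_hom : is_maj_hom (Y:=prod_majalg X X) (fun x => (q ord0 x, q ord_max x)).
  by move=> a b c; rewrite !maj_funP.
exists (MajHom q_hom); split=> [i|h Eh].
  by apply: maj_hom_ext => x; case: (I2_cases i) => ->.
apply: maj_hom_ext => x; rewrite /= -(Eh ord0) -(Eh ord_max) /=.
by case: (h x).
Qed.

Lemma majalg_finitely_complete : finitely_complete majalg_category.
Proof.
split.
  exists unit_majalg => X.
  exists (@MajHom X unit_majalg (fun _ => tt) (fun _ _ _ => erefl)).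
  by split=> // h _; apply: maj_hom_ext => x; case: (h x).
move=> X Y Z f g.
have fg_maj (p q r : prod_majalg X Y) : f p.1 = g p.2 -> f q.1 = g q.2 ->
    f r.1 = g r.2 -> f (maj p q r).1 = g (maj p q r).2.
  by move=> Ep Eq Er; rewrite /= !maj_funP Ep Eq Er.
exists (sub_majalg fg_maj), (maj_comp (fst_hom X Y) (sval_hom fg_maj)),
  (maj_comp (snd_hom X Y) (sval_hom fg_maj)); split.
  by apply: maj_hom_ext => -[p Ep].
move=> Q q1 q2 Eq; have Eqx x := congr1 (fun h : maj_hom Q Z => h x) Eq.
have q_hom : is_maj_hom (Y:=sub_majalg fg_maj) (fun x => exist _ (q1 x, q2 x) (Eqx x)).
  by move=> a b c; apply: sig_ext; rewrite /= !maj_funP.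
exists (MajHom q_hom); split; first by split; apply: maj_hom_ext.
move=> h [E1 E2]; apply: maj_hom_ext => x; apply: sig_ext.
by rewrite /= -E1 -E2 /=; case: (proj1_sig (h x)).
Qed.

Lemma power_mono_injective (A P R : majalg) n (pi : 'I_n -> maj_hom P A)
    (r : maj_hom R P) :
  is_power (C:=majalg_category) pi -> mono (C:=majalg_category) r ->
  forall u v : R, (forall i, pi i (r u) = pi i (r v)) -> u = v.
Proof.
move=> P_pow r_mono u v Euv.
have [t [_ Ut]] := P_pow unit_majalg (fun i => const_hom (pi i (r u))).
have Eu : t = maj_comp r (const_hom u) by apply: Ut => i; apply: maj_hom_ext.
have Ev : t = maj_comp r (const_hom v) by apply: Ut => i; apply: maj_hom_ext => ? /=.
have := r_mono _ _ _ (etrans (esym Eu) Ev).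
by move/(congr1 (fun h : maj_hom unit_majalg R => h tt)).
Qed.

Lemma majalg_M_closed n m k (xs : 'I_n -> 'I_m -> 'I_k) (ys : 'I_n -> 'I_k)
    (i0 : 'I_n) :
  (forall i i', matched_rows xs ys i i') -> has_M_closed_relations majalg_category xs ys.
Proof.
move=> matched A P R pi r P_pow r_mono B f R_cols.
pose Rel (t : 'I_n -> A) := exists u : R, forall i, pi i (r u) = t i.
have Rel_ys b : Rel (fun i => f (ys i) b).
  apply: (majority_closed_pairwise (@majAAB A) (@majABA A) (@majBAA A) _ _ i0).
    move=> t1 t2 t3 [u1 E1] [u2 E2] [u3 E3]; exists (maj u1 u2 u3) => i.
    by rewrite !maj_funP E1 E2 E3.
  move=> i i'; have [j [<- <-]] := matched i i'; have [h Eh] := R_cols j.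
  exists (fun i => f (xs i j) b) => //; exists (h b) => l.
  exact: (congr1 (fun g : maj_hom B A => g b) (Eh l)).
have [hf Ehf] := choice (fun b u => forall i, pi i (r u) = f (ys i) b) Rel_ys.
have hf_hom : is_maj_hom hf.
  move=> a b c; apply: (power_mono_injective P_pow r_mono) => i.
  by rewrite Ehf !maj_funP !Ehf.
by exists (MajHom hf_hom) => i; apply: maj_hom_ext => b; apply: Ehf.
Qed.

(* The order [b ==> a] on booleans is a sub-majority-algebra of the square
   that contains the columns of [Mal] at [x_1 = false, x_2 = true] but not
   the pair [(false, true)]. *)
Lemma majalg_not_malcev : ~ has_M_closed_relations majalg_category Mal_xs Mal_ys.
Proof.
move=> Mal_closed.
have ge_maj (p q r : prod_majalg bool_majalg bool_majalg) :
  p.2 ==> p.1 -> q.2 ==> q.1 -> r.2 ==> r.1 -> (maj p q r).2 ==> (maj p q r).1.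
  by case: p q r => -[] [] [[] []] [[] []].
pose f (v : 'I_2) := @const_hom bool_majalg (v != ord0).
have [|h Eh] := Mal_closed _ _ _ _ _ (@square_proj_power bool_majalg)
  (sval_hom_mono (P_maj:=ge_maj)) unit_majalg f.
  move=> j; have ge_j : (Mal_xs ord_max j != ord0) ==> (Mal_xs ord0 j != ord0).
    by case: j => -[|[|[|?]]].
  exists (const_hom (exist (fun p : bool * bool => p.2 ==> p.1) (_, _) ge_j
    : sub_majalg ge_maj)) => i.
  by apply: maj_hom_ext => -[]; case: (I2_cases i) => ->.
have := proj2_sig (h tt).
have := congr1 (fun g : maj_hom unit_majalg bool_majalg => g tt) (Eh ord0).
have := congr1 (fun g : maj_hom unit_majalg bool_majalg => g tt) (Eh ord_max).
by rewrite /=; case: (proj1_sig (h tt)) => a b /= -> ->.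
Qed.

Lemma matched_rows_dichotomy n m k (xs : 'I_n -> 'I_m -> 'I_k) (ys : 'I_n -> 'I_k) :
  (exists i i', ~ matched_rows xs ys i i') \/ forall i i', matched_rows xs ys i i'.
Proof.
have [|none] := excluded_middle_informative (exists i i', ~ matched_rows xs ys i i').
  by left.
right=> i i'; have [//|unmatched] := excluded_middle_informative (matched_rows xs ys i i').
by case: none; exists i, i'.
Qed.

Theorem corollary2p4 (n m k : nat) (hn : 1 <= n) (hk : 1 <= k)
    (xs : 'I_n -> 'I_m -> 'I_k) (ys : 'I_n -> 'I_k) :
  ((forall C : category, finitely_complete C ->
      has_M_closed_relations C xs ys -> malcev_category C) <->
   (forall (S : signature) (E : equations S),
      variety_has_M_closed_relations E xs ys -> malcev_variety E)) /\
  ((forall (S : signature) (E : equations S),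
      variety_has_M_closed_relations E xs ys -> malcev_variety E) <->
   (exists i i' : 'I_n,
      ~ (exists j : 'I_m, xs i j = ys i /\ xs i' j = ys i'))).
Proof.
pose i0 : 'I_n := Ordinal hn.
have c_a : (exists i i', ~ matched_rows xs ys i i') -> forall C : category,
    finitely_complete C -> has_M_closed_relations C xs ys -> malcev_category C.
  by move=> [i [i' unmatched]] C; apply: malcev_category_of_unmatched_rows unmatched.
have c_b : (exists i i', ~ matched_rows xs ys i i') -> forall S (E : equations S),
    variety_has_M_closed_relations E xs ys -> malcev_variety E.
  by move=> [i [i' unmatched]] S E; apply: malcev_variety_of_unmatched_rows unmatched.
have a_c : (forall C : category, finitely_complete C ->
    has_M_closed_relations C xs ys -> malcev_category C) ->
    exists i i', ~ matched_rows xs ys i i'.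
  move=> a; have [//|matched] := matched_rows_dichotomy xs ys.
  case: majalg_not_malcev.
  exact: (a _ majalg_finitely_complete (majalg_M_closed i0 matched)).2.
have b_c : (forall S (E : equations S),
    variety_has_M_closed_relations E xs ys -> malcev_variety E) ->
    exists i i', ~ matched_rows xs ys i i'.
  move=> b; have [//|matched] := matched_rows_dichotomy xs ys.
  by case: maj_variety_not_malcev; apply: b; apply: maj_variety_M_closed i0 matched.
by split; [split=> [/a_c/c_b|/b_c/c_a] | split=> [/b_c|/c_b]].
Qed.
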